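(* Let $G=(V,E)$ be a finite simple undirected graph with zipper constraint collection $\mathcal{Z}$, let $D\subseteq Z^2$, and let $\mathbb{S}$ be a downstream-enabled prescription on $D$. Suppose $\mathcal{K}^+$ is a minimum-cardinality clique cover of the augmented graph $G^+(\mathbb{S})$. Then there is a clique cover $\mathcal{K}$ of $G$ with the following properties: (i) $\mathcal{K}$ is faithful to $\mathbb{S}$; (ii) $\mathcal{K}$ satisfies every zipper constraint $(U,W,y)\in\mathcal{Z}$ with $U,W\in D$; (iii) $|\mathcal{K}|=|\mathcal{K}^+|$; and (iv) there is no clique cover $\mathcal{K}_h$ of $G$ that is faithful to $\mathbb{S}$ and has $|\mathcal{K}_h|<|\mathcal{K}|$.
   Context: A clique cover of a graph is a collection of cliques whose union is the vertex set. A zipper constraint collection is a finite set $\mathcal{Z}=\{(U_1,W_1,y_1),\dots,(U_m,W_m,y_m)\}$, where each $U_i,W_i\in E$ is an edge of $G$ and each $y_i$ is a label. A clique cover $\mathcal{K}$ satisfies $(U,W,y)$ if either no clique of $\mathcal{K}$ contains $U$, or some clique of $\mathcal{K}$ contains $W$. Let $Z^2=\{U_1,\dots,U_m,W_1,\dots,W_m\}$. Write $P\uparrow Q$ if $(P,Q,y)\in\mathcal{Z}$ for some $y$, and let $\rightsquigarrow$ be the transitive closure of $\uparrow$ on $Z^2$. A prescription on $D\subseteq Z^2$ is a subset $\mathbb{S}\subseteq D$. It is downstream enabled if, whenever $P_a\in\mathbb{S}$ and $P_a\rightsquigarrow P_b$, we have $P_b\in\mathbb{S}$ or $P_b\notin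 D$. A clique cover $\mathcal{K}$ of $G$ is faithful to $\mathbb{S}$ if every $P\in\mathbb{S}$ lies in some clique of $\mathcal{K}$ and no $P\in D\setminus\mathbb{S}$ lies in any clique of $\mathcal{K}$. Let $G'=(V,E\setminus(D\setminus\mathbb{S}))$. The augmented graph $G^+(\mathbb{S})$ has vertex set $\{[u]:u\in V\}\cup\{[u,w]:\{u,w\}\in\mathbb{S}\}$, where each $[A]$ is a new formal vertex labeled by the set $A$. Two distinct vertices $[A],[B]$ are adjacent if and only if $A\cup B$ is a clique in $G'$. *)

From Stdlib Require Import Relations.
From mathcomp Require Import all_boot.
Set Implicit Arguments. Unset Strict Implicit. Unset Printing Implicit Defensive.

Section Defs.

Variable X : finType.

Definition is_clique (Vs : {set X}) (r : rel X) (C : {set X}) : Prop :=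
  C != set0 /\ C \subset Vs /\
  (forall x y, x \in C -> y \in C -> x != y -> r x y).

Definition clique_cover (Vs : {set X}) (r : rel X) (K : {set {set X}}) : Prop :=
  (forall C, C \in K -> is_clique Vs r C) /\ \bigcup_(C in K) C = Vs.

Definition min_clique_cover (Vs : {set X}) (r : rel X) (K : {set {set X}}) : Prop :=
  clique_cover Vs r K /\
  forall K', clique_cover Vs r K' -> #|K| <= #|K'|.

End Defs.

Section Zipper.
Variable T : finType.
Variable e : rel T.     (* adjacency of G (assumed symmetric, irreflexive) *)
Variable L : finType.

(* edge {u,w} of G, represented as a two-element vertex set *)
Definition is_edge (A : {set T}) : Prop :=
  exists u w, u != w /\ e u w /\ A = [set u; w].

Definition zipper := ({set T} * {set T} * L)%type.

Definition Z2 (Z : {set zipper}) : {set {set T}} :=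
  [set z.1.1 | z in Z] :|: [set z.1.2 | z in Z].

Definition up (Z : {set zipper}) (P Q : {set T}) : Prop :=
  exists y, (P, Q, y) \in Z.

Definition reach (Z : {set zipper}) : relation {set T} := clos_trans _ (up Z).

Definition downstream_enabled (Z : {set zipper}) (D S : {set {set T}}) : Prop :=
  S \subset D /\
  forall Pa Pb, Pa \in S -> reach Z Pa Pb -> Pb \in S \/ Pb \notin D.

Definition faithful (D S : {set {set T}}) (K : {set {set T}}) : Prop :=
  (forall P, P \in S -> exists2 C, C \in K & P \subset C) /\
  (forall P, P \in D :\: S -> forall C, C \in K -> ~~ (P \subset C)).

Definition satisfies (K : {set {set T}}) (z : zipper) : Prop :=
  (forall C, C \in K -> ~~ (z.1.1 \subset C)) \/
  (exists2 C, C \in K & z.1.2 \subset C).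

Definition adjG' (D S : {set {set T}}) : rel T :=
  fun x y => e x y && ([set x; y] \notin D :\: S).

Definition is_clique_G' (D S : {set {set T}}) (A : {set T}) : bool :=
  [forall x in A, forall y in A, (x != y) ==> adjG' D S x y].

(* Augmented graph G^+(S): formal vertex [A] is represented by its label set A;
   the vertex set is {[u] : u in V} ∪ {[u,w] : {u,w} in S} (labels of the two kinds
   have sizes 1 and 2, so they are distinct). *)
Definition Vplus (S : {set {set T}}) : {set {set T}} :=
  [set [set u] | u : T] :|: S.

Definition adjplus (D S : {set {set T}}) : rel {set T} :=
  fun A B => (A != B) && is_clique_G' D S (A :|: B).

End Zipper.

From Stdlib Require Import Relations.
From mathcomp Require Import all_boot.

Set Implicit Arguments.
Unset Strict Implicit.
Unset Printing Implicit Defensive.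

(* A clique of G^+(S) has as union of labels a clique of G', the graph G with
   the edges of D \ S removed; on a minimum cover this union map is injective,
   since two cliques with the same union could be merged into one.  The images
   form a cover of G of the same size that contains every edge of S and no edge
   of D \ S; downstream enabledness then yields the zipper constraints.
   Conversely, a faithful cover K of G gives the cover of G^+(S) by the sets
   of formal vertices whose labels lie in a clique of K, of size at most |K|,
   so minimality transfers from G^+(S) to faithful covers of G. *)

Section MinCliqueCover.

Variables (X : finType) (V : {set X}) (r : rel X).

Lemma min_clique_cover_merge (K : {set {set X}}) (C1 C2 : {set X}) :
  min_clique_cover V r K -> C1 \in K -> C2 \in K ->
  is_clique V r (C1 :|: C2) -> C1 = C2.
Proof.
move=> [[K_cliques K_cover] K_min] C1K C2K C12_clique.
apply/eqP/negPn/negP => C1_neq_C2.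
pose K' := (C1 :|: C2) |: (K :\: [set C1; C2]).
have K'_cover : clique_cover V r K'.
  split=> [C | ].
  - by rewrite !inE => /predU1P[-> // | /andP[_ /K_cliques]].
  - rewrite -K_cover; apply/setP => x; apply/bigcupP/bigcupP => [[C] | [C CK xC]].
    + rewrite !inE => /predU1P[-> | /andP[_ CK] xC]; last by exists C.
      by rewrite inE => /orP[]; [exists C1 | exists C2].
    + have [C12 | C_notin] := boolP (C \in [set C1; C2]); last first.
        by exists C; rewrite // in_setU1 in_setD C_notin CK orbT.
      exists (C1 :|: C2); first exact: setU11.
      by move: C12; rewrite !inE => /orP[] /eqP <-; rewrite xC ?orbT.
have K_split : #|[set C1; C2]| + #|K :\: [set C1; C2]| = #|K|.
  by rewrite -(cardsID [set C1; C2] K) (setIidPr _) // subUset !sub1set C1K C2K.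
have := K_min K' K'_cover; rewrite -K_split cards2 C1_neq_C2 cardsU1.
by rewrite leq_add2r; case: (_ \notin _).
Qed.

End MinCliqueCover.

Section Zippers.

Variables (T L : finType) (Z : {set zipper T L}).

Lemma Z2_edge (e : rel T) (P : {set T}) :
  (forall z, z \in Z -> is_edge e z.1.1 /\ is_edge e z.1.2) ->
  P \in Z2 Z -> is_edge e P.
Proof.
by move=> Z_edges; rewrite inE => /orP[] /imsetP[z /Z_edges[? ?] ->].
Qed.

Lemma faithful_satisfies (D S K : {set {set T}}) (z : zipper T L) :
  downstream_enabled Z D S -> faithful D S K ->
  z \in Z -> z.1.1 \in D -> z.1.2 \in D -> satisfies K z.
Proof.
move=> [_ downstream] [S_covered DS_avoided]; case: z => [[U W] y] /= zZ UD WD.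
have [US | UnS] := boolP (U \in S).
- right; apply: S_covered.
  have UW : reach Z U W by apply: t_step; exists y.
  by case: (downstream U W US UW); rewrite ?WD.
- by left => C CK; apply: DS_avoided CK; rewrite inE UnS.
Qed.

End Zippers.

Section AugmentedGraph.

Variables (T : finType) (e : rel T) (D S : {set {set T}}).

Local Notation clique' := (is_clique_G' e D S).
Local Notation clique_plus := (is_clique (Vplus S) (adjplus e D S)).

Lemma clique_G'P (A : {set T}) :
  reflect (forall x y, x \in A -> y \in A -> x != y -> adjG' e D S x y) (clique' A).
Proof.
apply: (iffP forall_inP) => [A_clique x y xA | A_clique x xA].
- by move/forall_inP: (A_clique x xA) => /(_ y) A_x /A_x /implyP.
- by apply/forall_inP => y yA; apply/implyP; apply: A_clique.
Qed.

Lemma clique_G'S (A B : {set T}) : A \subset B -> clique' B -> clique' A.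
Proof.
move=> /subsetP AB /clique_G'P B_clique; apply/clique_G'P => x y /AB xB /AB yB.
exact: B_clique.
Qed.

Lemma clique_G'_clique (A : {set T}) :
  A != set0 -> clique' A -> is_clique [set: T] e A.
Proof.
move=> A_neq0 /clique_G'P A_clique; split; [done | split; first exact: subsetT].
by move=> x y xA yA /(A_clique x y xA yA) /andP[].
Qed.

Lemma clique_avoiding_G' (A : {set T}) :
  is_clique [set: T] e A -> (forall P, P \in D :\: S -> ~~ (P \subset A)) -> clique' A.
Proof.
move=> [_ [_ A_clique]] A_avoids; apply/clique_G'P => x y xA yA xy.
rewrite /adjG' A_clique //=; apply/negP => /A_avoids/negP; apply.
by rewrite subUset !sub1set xA yA.
Qed.

Definition Vplus_within (C : {set T}) : {set {set T}} := [set A in Vplus S | A \subset C].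

Hypotheses (e_sym : symmetric e) (D_edges : forall P, P \in D -> is_edge e P).

Lemma clique_G'_avoids (P A : {set T}) : P \in D :\: S -> clique' A -> ~~ (P \subset A).
Proof.
move=> PDS /clique_G'P A_clique; apply/negP => PA.
have [u [w [uw [_ P_uw]]]] := D_edges (subsetP (subsetDl D S) P PDS).
move: PA; rewrite P_uw subUset !sub1set => /andP[uA wA].
by move: (A_clique u w uA wA uw); rewrite /adjG' -P_uw PDS andbF.
Qed.

Hypothesis S_sub_D : S \subset D.

Lemma Vplus_clique_G' (A : {set T}) : A \in Vplus S -> clique' A.
Proof.
rewrite inE => /orP[/imsetP[u _ ->] | AS].
  by apply/clique_G'P => x y /set1P-> /set1P->; rewrite eqxx.
have [u [w [uw [euw A_uw]]]] := D_edges (subsetP S_sub_D A AS).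
have uw_ok : [set u; w] \notin D :\: S by rewrite -A_uw inE AS.
apply/clique_G'P => x y; rewrite A_uw !inE.
move=> /orP[]/eqP-> /orP[]/eqP-> /=; rewrite ?eqxx // => _.
  by rewrite /adjG' euw uw_ok.
by rewrite /adjG' e_sym setUC euw uw_ok.
Qed.

Lemma Vplus_neq0 (A : {set T}) : A \in Vplus S -> A != set0.
Proof.
rewrite inE => /orP[/imsetP[u _ ->] | AS]; apply/set0Pn.
  by exists u; apply: set11.
have [u [w [_ [_ ->]]]] := D_edges (subsetP S_sub_D A AS).
by exists u; apply: set21.
Qed.

Lemma cover_clique_plus (C : {set {set T}}) : clique_plus C -> clique' (cover C).
Proof.
move=> [_ [C_sub C_clique]]; apply/clique_G'P => x y /bigcupP[A AC xA] /bigcupP[B BC yB].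
have [AB | AB] := eqVneq A B.
  by subst B; move/clique_G'P: (Vplus_clique_G' (subsetP C_sub A AC)); apply.
have /andP[_ /clique_G'P AB_clique] := C_clique A B AC BC AB.
by apply: AB_clique; rewrite inE ?xA ?yB ?orbT.
Qed.

Lemma clique_plus_cover (C : {set {set T}}) :
  C != set0 -> C \subset Vplus S -> clique' (cover C) -> clique_plus C.
Proof.
move=> C_neq0 C_sub C_clique; split; [done | split; first done].
move=> A B AC BC AB; rewrite /adjplus AB; apply: clique_G'S C_clique.
by rewrite subUset !(bigcup_sup _ AC, bigcup_sup _ BC).
Qed.

Lemma cover_injective_min (Kp : {set {set {set T}}}) :
  min_clique_cover (Vplus S) (adjplus e D S) Kp -> {in Kp &, injective cover}.
Proof.
move=> Kp_min C1 C2 C1K C2K C12; have [[Kp_cliques _] _] := Kp_min.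
have C1_clique := Kp_cliques C1 C1K; have [C1_neq0 [C1_sub _]] := C1_clique.
have [_ [C2_sub _]] := Kp_cliques C2 C2K.
apply: min_clique_cover_merge Kp_min C1K C2K (clique_plus_cover _ _ _).
- exact: subset_neq0 (subsetUl C1 C2) C1_neq0.
- by rewrite subUset C1_sub C2_sub.
- rewrite /cover bigcup_setU -/(cover C1) -/(cover C2) -C12 setUid.
  exact: cover_clique_plus C1_clique.
Qed.

Lemma cover_imset_clique_cover (Kp : {set {set {set T}}}) :
  clique_cover (Vplus S) (adjplus e D S) Kp -> clique_cover [set: T] e (cover @: Kp).
Proof.
move=> [Kp_cliques Kp_cover]; split.
- move=> _ /imsetP[C CK ->]; have C_clique := Kp_cliques C CK.
  apply: clique_G'_clique (cover_clique_plus C_clique).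
  have [/set0Pn[A AC] [C_sub _]] := C_clique.
  exact: subset_neq0 (bigcup_sup _ AC) (Vplus_neq0 (subsetP C_sub A AC)).
- apply/setP => x; rewrite inE.
  have : [set x] \in Vplus S by rewrite inE imset_f.
  rewrite -Kp_cover => /bigcupP[C CK xC].
  apply/bigcupP; exists (cover C); first exact: imset_f.
  by apply/bigcupP; exists [set x]; rewrite ?set11.
Qed.

Lemma cover_imset_faithful (Kp : {set {set {set T}}}) :
  clique_cover (Vplus S) (adjplus e D S) Kp -> faithful D S (cover @: Kp).
Proof.
move=> [Kp_cliques Kp_cover]; split.
- move=> P PS; have : P \in Vplus S by rewrite inE PS orbT.
  rewrite -Kp_cover => /bigcupP[C CK PC].
  by exists (cover C); [apply: imset_f | apply: bigcup_sup].
- move=> P PDS _ /imsetP[C CK ->].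
  exact: clique_G'_avoids PDS (cover_clique_plus (Kp_cliques C CK)).
Qed.

Lemma Vplus_within_clique_cover (K : {set {set T}}) :
  clique_cover [set: T] e K -> faithful D S K ->
  clique_cover (Vplus S) (adjplus e D S) (Vplus_within @: K).
Proof.
move=> [K_cliques K_cover] [S_covered DS_avoided]; split.
- move=> _ /imsetP[C CK ->]; have C_clique := K_cliques C CK.
  apply: clique_plus_cover.
  + have [/set0Pn[x xC] _] := C_clique; apply/set0Pn; exists [set x].
    by rewrite !inE imset_f //= sub1set xC.
  + by apply/subsetP => A; rewrite inE => /andP[].
  + have C_clique' := clique_avoiding_G' C_clique (fun P PDS => DS_avoided P PDS C CK).
    by apply: clique_G'S C_clique'; apply/bigcupsP => A; rewrite inE => /andP[].
- apply/setP => A; apply/bigcupP/idP => [[_ /imsetP[C _ ->]] | AV].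
    by rewrite inE => /andP[].
  have [C CK AC] : exists2 C, C \in K & A \subset C.
    move: (AV); rewrite inE => /orP[/imsetP[u _ ->] | AS]; last exact: S_covered.
    have : u \in [set: T] by rewrite inE.
    by rewrite -K_cover => /bigcupP[C CK uC]; exists C; rewrite ?sub1set.
  by exists (Vplus_within C); [apply: imset_f | rewrite inE AV AC].
Qed.

End AugmentedGraph.

Theorem lemma5 (T : finType) (e : rel T) (L : finType)
  (e_sym : symmetric e) (e_irr : irreflexive e)
  (Z : {set zipper T L})
  (Z_edges : forall z, z \in Z -> is_edge e z.1.1 /\ is_edge e z.1.2)
  (D S : {set {set T}})
  (HD : D \subset Z2 Z)
  (HS : downstream_enabled Z D S)
  (Kp : {set {set {set T}}})
  (HKp : min_clique_cover (Vplus S) (adjplus e D S) Kp) :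
  exists K : {set {set T}},
    [/\ clique_cover [set: T] e K,
        faithful D S K,
        (forall z, z \in Z -> z.1.1 \in D -> z.1.2 \in D -> satisfies K z),
        #|K| = #|Kp| &
        ~ (exists Kh : {set {set T}},
             [/\ clique_cover [set: T] e Kh, faithful D S Kh & #|Kh| < #|K|])].
Proof.
have D_edges P : P \in D -> is_edge e P by move/(subsetP HD); apply: Z2_edge.
have [S_sub_D _] := HS; have [Kp_cover Kp_min] := HKp.
have K_faithful := cover_imset_faithful e_sym D_edges S_sub_D Kp_cover.
have K_card : #|cover @: Kp| = #|Kp|.
  exact: card_in_imset (cover_injective_min e_sym D_edges S_sub_D HKp).
exists (cover @: Kp); split => //.
- exact: cover_imset_clique_cover e_sym D_edges S_sub_D _ Kp_cover.
- by move=> z; apply: faithful_satisfies HS K_faithful.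
- move=> [Kh [Kh_cover Kh_faithful]]; apply/negP; rewrite -leqNgt K_card.
  have := Kp_min _ (Vplus_within_clique_cover Kh_cover Kh_faithful).
  by move/leq_trans; apply; apply: leq_imset_card.
Qed.
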